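(* Let $x\in\mathbb{R}$. Every real $y$ that is computable from $x$ can be expressed as a finite sum of reals each of which is Turing equivalent to $x$.
   Context: Turing reducibility between reals is the usual one (e.g. via binary/decimal expansions). *)

From Stdlib Require Import Reals ZArith List Lia.
Import ListNotations.
Open Scope R_scope.

Inductive prf : Type :=
| PZero : prf
| PSucc : prf
| PProj : nat -> prf
| POracle : prf
| PComp : prf -> list prf -> prf
| PPrimRec : prf -> prf -> prf
| PMu : prf -> prf.

Inductive peval (o : nat -> nat) : prf -> list nat -> nat -> Prop :=
| ev_zero v : peval o PZero v 0
| ev_succ n v : peval o PSucc (n :: v) (S n)
| ev_proj i v : (i < length v)%nat -> peval o (PProj i) v (nth i v 0%nat)
| ev_oracle n v : peval o POracle (n :: v) (o n)
| ev_comp f gs v ws r :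
    pevals o gs v ws -> peval o f ws r -> peval o (PComp f gs) v r
| ev_rec0 f g v r : peval o f v r -> peval o (PPrimRec f g) (0%nat :: v) r
| ev_recS f g n v a r :
    peval o (PPrimRec f g) (n :: v) a -> peval o g (n :: a :: v) r ->
    peval o (PPrimRec f g) (S n :: v) r
| ev_mu f v n :
    peval o f (n :: v) 0 ->
    (forall m, (m < n)%nat -> exists k, peval o f (m :: v) (S k)) ->
    peval o (PMu f) v n
with pevals (o : nat -> nat) : list prf -> list nat -> list nat -> Prop :=
| evs_nil v : pevals o [] v []
| evs_cons g gs v w ws :
    peval o g v w -> pevals o gs v ws -> pevals o (g :: gs) v (w :: ws).

Definition oracle_computable (g o : nat -> nat) : Prop :=
  exists c : prf, forall n : nat, peval o c [n] (g n).

(* Reals as oracles: the binary expansion of x, given as the sequence      *)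
(* n |-> floor(2^n * x) (integer part followed by the first n binary       *)
(* digits of the canonical expansion), coded into nat.                      *)

Definition nat_of_Z (z : Z) : nat :=
  if (0 <=? z)%Z then Z.to_nat (2 * z)%Z else Z.to_nat (- 2 * z - 1)%Z.

Definition real_oracle (x : R) : nat -> nat :=
  fun n => nat_of_Z (Int_part (x * 2 ^ n)).

Definition turing_le (y x : R) : Prop :=
  oracle_computable (real_oracle y) (real_oracle x).

Definition turing_equiv (y x : R) : Prop := turing_le y x /\ turing_le x y.

Fixpoint sum_list (l : list R) : R :=
  match l with [] => 0 | z :: l' => z + sum_list l' end.

(* Shift y by a natural number P to y' = y + P >= 0, let a_k be the binary digits
   of x, and build a real e whose k-th block of five binary digits is 1 0 a_k d_k,
   the bits d_k being chosen computably from x and y so that the integer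
   S_k = floor(2^(5k+5) y') + floor(2^(5k+5) e) is 2 a_k modulo 4.  Then
   y = (y' + e) + (- P - e).  Since S_k is even and floor(2^(5k+5) (y' + e)) is S_k
   or S_k + 1, the truncations floor(2^n (y' + e)) with n < 5k + 5 are those of S_k,
   which is computable from x; conversely a_k is bit 1 of S_k.  As no block vanishes,
   e has no terminating expansion, so floor(- 2^n e) = - floor(2^n e) - 1: the
   summand - P - e is equivalent to e, which is computable from x and has the a_k
   among its digits. *)

From Stdlib Require Import Reals ZArith List Lia Lra ZifyNat.
Import ListNotations.
Local Open Scope nat_scope.

Lemma peval_proj o i v r : (i < length v) -> r = nth i v 0 -> peval o (PProj i) v r.
Proof. intros H ->. now constructor. Qed.

Ltac solve_proj := apply peval_proj; simpl; [lia | first [reflexivity | lia]].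

Definition prf_add := PPrimRec (PProj 0) (PComp PSucc [PProj 1]).

Lemma peval_add o a b : peval o prf_add [a; b] (a + b).
Proof.
  induction a as [|a IH].
  - constructor. solve_proj.
  - eapply ev_recS; [exact IH|].
    econstructor; [constructor; [solve_proj | constructor] | constructor].
Qed.

Definition prf_pred := PPrimRec PZero (PProj 0).

Lemma peval_pred o a : peval o prf_pred [a] (Nat.pred a).
Proof.
  induction a as [|a IH].
  - repeat constructor.
  - eapply ev_recS; [exact IH|]. solve_proj.
Qed.

Definition prf_sub := PComp (PPrimRec (PProj 0) (PComp prf_pred [PProj 1])) [PProj 1; PProj 0].

Lemma peval_sub o a b : peval o prf_sub [a; b] (a - b).
Proof.
  econstructor.
  - constructor; [solve_proj|].
    constructor; [solve_proj | constructor].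
  - induction b as [|b IH].
    + constructor. solve_proj.
    + eapply ev_recS; [exact IH|].
      econstructor; [constructor; [solve_proj | constructor]|].
      replace (a - S b) with (Nat.pred (a - b)) by lia. apply peval_pred.
Qed.

Definition prf_ifz := PPrimRec (PProj 0) (PProj 3).

Lemma peval_ifz o c a b : peval o prf_ifz [c; a; b] (match c with 0 => a | S _ => b end).
Proof.
  induction c as [|c IH].
  - constructor. solve_proj.
  - eapply ev_recS; [exact IH|]. solve_proj.
Qed.

Fixpoint prf_const (n : nat) : prf :=
  match n with 0 => PZero | S m => PComp PSucc [prf_const m] end.

Lemma peval_const o n v : peval o (prf_const n) v n.
Proof. induction n as [|n IH]; simpl; repeat econstructor; exact IH. Qed.

Lemma pevals_projs o v : pevals o (map PProj (seq 0 (length v))) v v.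
Proof.
  enough (H : forall l pre, pevals o (map PProj (seq (length pre) (length l))) (pre ++ l) l)
    by exact (H v []).
  induction l as [|a l IH]; intros pre; simpl; constructor.
  - apply peval_proj; [rewrite length_app; simpl; lia | symmetry; apply nth_middle].
  - specialize (IH (pre ++ [a])).
    rewrite length_app, <- app_assoc, Nat.add_1_r in IH. exact IH.
Qed.

(** * Primitive recursive expressions *)

(* [Rec b s n] is primitive recursion on the value of [n]: the step [s] sees the
   counter as [Var 0], the previous value as [Var 1] and [Var i] as [Var (i + 2)]. *)
Inductive expr : Type :=
| Var (i : nat) | Cst (n : nat) | Add (a b : expr) | Sub (a b : expr) | Ifz (a b c : expr)
| Rec (b s n : expr) | Orc (a : expr) | Fn (a : expr).

Fixpoint eval_expr (o g : nat -> nat) (env : list nat) (e : expr) : nat :=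
  match e with
  | Var i => nth i env 0
  | Cst n => n
  | Add a b => eval_expr o g env a + eval_expr o g env b
  | Sub a b => eval_expr o g env a - eval_expr o g env b
  | Ifz a b c =>
      match eval_expr o g env a with 0 => eval_expr o g env b | S _ => eval_expr o g env c end
  | Rec b s n => nat_rect (fun _ => nat) (eval_expr o g env b)
                   (fun m acc => eval_expr o g (m :: acc :: env) s) (eval_expr o g env n)
  | Orc a => o (eval_expr o g env a)
  | Fn a => g (eval_expr o g env a)
  end.

Fixpoint expr_wf (k : nat) (e : expr) : Prop :=
  match e with
  | Var i => (i < k)
  | Cst _ => True
  | Add a b | Sub a b => expr_wf k a /\ expr_wf k b
  | Ifz a b c => expr_wf k a /\ expr_wf k b /\ expr_wf k c
  | Rec b s n => expr_wf k b /\ expr_wf (S (S k)) s /\ expr_wf k n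
  | Orc a | Fn a => expr_wf k a
  end.

Lemma expr_compile o g : oracle_computable g o ->
  forall e k, expr_wf k e ->
  exists c, forall v, length v = k -> peval o c v (eval_expr o g v e).
Proof.
  intros [cg Hg] e. induction e as [i|n|a IHa b IHb|a IHa b IHb|a IHa b IHb d IHd
    |b IHb s IHs n IHn|a IHa|a IHa]; intros k Hwf; simpl in Hwf.
  - exists (PProj i). intros v <-. now apply peval_proj.
  - exists (prf_const n). intros v _. apply peval_const.
  - destruct Hwf as [Ha Hb], (IHa k Ha) as [ca Hca], (IHb k Hb) as [cb Hcb].
    exists (PComp prf_add [ca; cb]). intros v Hv.
    econstructor; [repeat constructor; auto | apply peval_add].
  - destruct Hwf as [Ha Hb], (IHa k Ha) as [ca Hca], (IHb k Hb) as [cb Hcb].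
    exists (PComp prf_sub [ca; cb]). intros v Hv.
    econstructor; [repeat constructor; auto | apply peval_sub].
  - destruct Hwf as [Ha [Hb Hd]], (IHa k Ha) as [ca Hca], (IHb k Hb) as [cb Hcb],
      (IHd k Hd) as [cd Hcd].
    exists (PComp prf_ifz [ca; cb; cd]). intros v Hv.
    econstructor; [repeat constructor; auto | apply peval_ifz].
  - destruct Hwf as [Hb [Hs Hn]], (IHb k Hb) as [cb Hcb], (IHs _ Hs) as [cs Hcs],
      (IHn k Hn) as [cn Hcn].
    exists (PComp (PPrimRec cb cs) (cn :: map PProj (seq 0 k))). intros v Hv.
    apply ev_comp with (ws := eval_expr o g v n :: v).
    + constructor; [now apply Hcn | subst k; apply pevals_projs].
    + simpl. induction (eval_expr o g v n) as [|m IH]; simpl.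
      * constructor. now apply Hcb.
      * eapply ev_recS; [exact IH|]. apply Hcs. simpl; lia.
  - destruct (IHa k Hwf) as [ca Hca]. exists (PComp POracle [ca]). intros v Hv.
    econstructor; [repeat constructor; auto | constructor].
  - destruct (IHa k Hwf) as [ca Hca]. exists (PComp cg [ca]). intros v Hv.
    econstructor; [repeat constructor; auto | apply Hg].
Qed.

Lemma oracle_computable_expr o g e f : oracle_computable g o -> expr_wf 1 e ->
  (forall n, eval_expr o g [n] e = f n) -> oracle_computable f o.
Proof.
  intros Hg Hwf Hf. destruct (expr_compile o g Hg e 1 Hwf) as [c Hc].
  exists c. intros n. rewrite <- Hf. now apply Hc.
Qed.

Lemma oracle_computable_zero o : oracle_computable (fun _ => 0) o.
Proof. exists PZero. constructor. Qed.

Definition parity a := Rec (Cst 0) (Sub (Cst 1) (Var 1)) a.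
Definition half a := Rec (Cst 0) (Add (Var 1) (parity (Var 0))) a.
Definition double a := Add a a.
Definition shiftr a j := Rec a (half (Var 1)) j.
Definition shiftl a j := Rec a (double (Var 1)) j.
Definition mod4 a := Add (parity a) (double (parity (half a))).

Fixpoint affine (m c : nat) (a : expr) : expr :=
  match m with 0 => Cst c | S m => Add a (affine m c a) end.

Section ExprArith.
Variables o g : nat -> nat.
Notation ev := (eval_expr o g).

Lemma eval_Rec env b s n (F : nat -> nat) : F 0 = ev env b ->
  (forall m, F (S m) = ev (m :: F m :: env) s) -> ev env (Rec b s n) = F (ev env n).
Proof.
  intros H0 HS. simpl. induction (ev env n) as [|m IH]; simpl; congruence.
Qed.

Lemma eval_parity env a : ev env (parity a) = ev env a mod 2.
Proof.
  apply eval_Rec with (F := fun n => n mod 2); [reflexivity|].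
  intros m. cbn [eval_expr nth]. lia.
Qed.

Lemma eval_half env a : ev env (half a) = ev env a / 2.
Proof.
  apply eval_Rec with (F := fun n => n / 2); [reflexivity|].
  intros m. cbn [eval_expr nth]. rewrite eval_parity. cbn [eval_expr nth]. lia.
Qed.

Lemma eval_double env a : ev env (double a) = 2 * ev env a.
Proof. simpl. lia. Qed.

Lemma eval_shiftr env a j : ev env (shiftr a j) = ev env a / 2 ^ ev env j.
Proof.
  apply eval_Rec with (F := fun n => ev env a / 2 ^ n); [now rewrite Nat.div_1_r|]. intros m.
  rewrite eval_half. cbn [eval_expr nth].
  now rewrite Nat.Div0.div_div, Nat.pow_succ_r', Nat.mul_comm.
Qed.

Lemma eval_shiftl env a j : ev env (shiftl a j) = ev env a * 2 ^ ev env j.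
Proof.
  apply eval_Rec with (F := fun n => ev env a * 2 ^ n); [simpl; lia|].
  intros m. rewrite eval_double, Nat.pow_succ_r'. cbn [eval_expr nth]. lia.
Qed.

Lemma eval_mod4 env a : ev env (mod4 a) = ev env a mod 4.
Proof. cbn [eval_expr mod4 double]. rewrite !eval_parity, eval_half. lia. Qed.

Lemma eval_affine env m c a : ev env (affine m c a) = m * ev env a + c.
Proof. induction m as [|m IH]; simpl; lia. Qed.

End ExprArith.

(** * Dyadic floors *)

Local Open Scope R_scope.

Definition dfloor (z : R) (n : nat) : Z := Int_part (z * 2 ^ n).

Lemma real_oracle_dfloor z n : real_oracle z n = nat_of_Z (dfloor z n).
Proof. reflexivity. Qed.

Lemma dfloor_spec z n : IZR (dfloor z n) <= z * 2 ^ n < IZR (dfloor z n) + 1.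
Proof. unfold dfloor. destruct (base_Int_part (z * 2 ^ n)). lra. Qed.

Lemma dfloor_unique z n m : IZR m <= z * 2 ^ n < IZR m + 1 -> dfloor z n = m.
Proof. intros H. symmetry. apply Int_part_spec. lra. Qed.

Lemma IZR_pow2 n : IZR (2 ^ Z.of_nat n) = 2 ^ n.
Proof. now rewrite pow_IZR. Qed.

Lemma Nat2Z_inj_pow2 n : Z.of_nat (2 ^ n) = (2 ^ Z.of_nat n)%Z.
Proof. now rewrite Nat2Z.inj_pow. Qed.

Lemma dfloor_div_pow2 z n j : dfloor z n = (dfloor z (n + j) / 2 ^ Z.of_nat j)%Z.
Proof.
  apply dfloor_unique.
  set (F := dfloor z (n + j)). set (M := (2 ^ Z.of_nat j)%Z).
  assert (HM : (0 < M)%Z) by (apply Z.pow_pos_nonneg; lia).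
  pose proof (dfloor_spec z (n + j)) as Hs. fold F in Hs. rewrite pow_add, <- Rmult_assoc in Hs.
  assert (H1 : IZR (F / M) * IZR M <= IZR F).
  { rewrite <- mult_IZR. apply IZR_le. rewrite Z.mul_comm. now apply Z.mul_div_le. }
  assert (H2 : IZR F + 1 <= (IZR (F / M) + 1) * IZR M).
  { replace 1 with (IZR 1) by reflexivity. rewrite <- !plus_IZR, <- mult_IZR. apply IZR_le.
    pose proof (Z.mul_succ_div_gt F M HM). lia. }
  unfold M in *. rewrite IZR_pow2 in H1, H2. pose proof (pow_lt 2 j ltac:(lra)).
  split.
  - apply Rmult_le_reg_r with (2 ^ j); lra.
  - apply Rmult_lt_reg_r with (2 ^ j); lra.
Qed.

Lemma dfloor_add_IZR z m n : dfloor (z + IZR m) n = (dfloor z n + m * 2 ^ Z.of_nat n)%Z.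
Proof.
  apply dfloor_unique. pose proof (dfloor_spec z n).
  rewrite plus_IZR, mult_IZR, IZR_pow2. nra.
Qed.

Lemma dfloor_add_bounds a b n :
  (dfloor a n + dfloor b n <= dfloor (a + b) n <= dfloor a n + dfloor b n + 1)%Z.
Proof.
  pose proof (dfloor_spec a n). pose proof (dfloor_spec b n). pose proof (dfloor_spec (a + b) n).
  assert (IZR (dfloor a n + dfloor b n) < IZR (dfloor (a + b) n + 1)).
  { rewrite !plus_IZR. nra. }
  assert (IZR (dfloor (a + b) n) < IZR (dfloor a n + dfloor b n + 2)).
  { rewrite !plus_IZR. nra. }
  apply lt_IZR in H2, H3. lia.
Qed.

Lemma dfloor_opp z n : IZR (dfloor z n) < z * 2 ^ n -> dfloor (- z) n = (- dfloor z n - 1)%Z.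
Proof.
  intros H. apply dfloor_unique. pose proof (dfloor_spec z n).
  rewrite minus_IZR, opp_IZR. simpl. lra.
Qed.

(** * Reals with prescribed blocks of binary digits *)

Section Blocks.
Variable b : nat -> nat.
Hypothesis b_range : forall k, (1 <= b k <= 30)%nat.

Fixpoint blocks (K : nat) : nat :=
  match K with 0 => 0 | S k => 32 * blocks k + b k end%nat.

Lemma blocks_bound K m : (31 * blocks (K + m) + 30 <= 32 ^ m * (31 * blocks K + 30))%nat.
Proof.
  induction m as [|m IH]; [rewrite Nat.add_0_r; simpl; lia|].
  replace (K + S m)%nat with (S (K + m)) by lia. rewrite Nat.pow_succ_r', <- Nat.mul_assoc.
  set (X := (32 ^ m * (31 * blocks K + 30))%nat) in *. cbn [blocks].
  pose proof (b_range (K + m)). lia.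
Qed.

(* [30/31] is the sum of [30 / 32^i] over [i >= 1], which bounds all later blocks. *)
Let lower K := INR (blocks K) / 32 ^ K.
Let upper K := (INR (blocks K) + 30 / 31) / 32 ^ K.

Lemma pow32_pos K : 0 < 32 ^ K.
Proof. apply pow_lt; lra. Qed.

Lemma lower_lt_succ K : lower K < lower (S K).
Proof.
  unfold lower. cbn [blocks]. pose proof (b_range K) as [Hb _]. pose proof (pow32_pos K).
  apply le_INR in Hb. rewrite plus_INR, mult_INR. simpl (INR 1) in Hb. simpl pow.
  replace (INR 32) with 32 by (simpl; lra).
  apply Rmult_lt_reg_r with (32 * 32 ^ K); [lra|].
  field_simplify; nra.
Qed.

Lemma lower_le_upper m K : lower m <= upper K.
Proof.
  destruct (Nat.le_gt_cases m K) as [Hle|Hgt].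
  - apply Rle_trans with (lower K).
    + induction Hle as [|K Hle IH]; [lra|]. pose proof (lower_lt_succ K). lra.
    + unfold lower, upper. pose proof (pow32_pos K).
      apply Rmult_le_compat_r; [left; now apply Rinv_0_lt_compat | lra].
  - replace m with (K + (m - K))%nat by lia. set (d := (m - K)%nat).
    pose proof (blocks_bound K d) as Hi. apply le_INR in Hi.
    rewrite !plus_INR, !mult_INR, pow_INR, plus_INR, mult_INR in Hi.
    replace (INR 31) with 31 in Hi by (simpl; lra). replace (INR 30) with 30 in Hi by (simpl; lra).
    replace (INR 32) with 32 in Hi by (simpl; lra).
    unfold lower, upper. rewrite pow_add. pose proof (pow32_pos K). pose proof (pow32_pos d).
    apply Rmult_le_reg_r with (32 ^ K * 32 ^ d); [nra|].
    field_simplify; nra.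
Qed.

Lemma exists_real_with_blocks : exists e,
  (forall K, dfloor e (5 * K) = Z.of_nat (blocks K)) /\
  (forall n, IZR (dfloor e n) < e * 2 ^ n).
Proof.
  destruct (completeness (fun r => exists K, r = lower K)) as [e [Hub Hlub]].
  - exists (upper 0). intros r [K ->]. apply lower_le_upper.
  - exists (lower 0). eauto.
  - assert (Hlow : forall K, lower K < e).
    { intros K. apply Rlt_le_trans with (lower (S K)); [apply lower_lt_succ | apply Hub; eauto]. }
    assert (Hup : forall K, e <= upper K).
    { intros K. apply Hlub. intros r [m ->]. apply lower_le_upper. }
    assert (Hpow : forall K, 2 ^ (5 * K) = 32 ^ K).
    { intros K. rewrite pow_mult. f_equal. simpl. lra. }
    assert (Hfloor : forall K, INR (blocks K) < e * 2 ^ (5 * K) < INR (blocks K) + 1).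
    { intros K. rewrite Hpow. specialize (Hlow K). specialize (Hup K).
      unfold lower, upper in *. pose proof (pow32_pos K).
      apply Rmult_lt_compat_r with (r := 32 ^ K) in Hlow; [|lra].
      apply Rmult_le_compat_r with (r := 32 ^ K) in Hup; [|lra].
      field_simplify in Hlow; [|lra]. field_simplify in Hup; [|lra]. lra. }
    exists e. split.
    + intros K. apply dfloor_unique. rewrite <- INR_IZR_INZ. specialize (Hfloor K). lra.
    + (* A dyadic e would make [e * 2^(5n)] an integer strictly inside
         ([blocks n], [blocks n + 1]). *)
      intros n. destruct (Rle_lt_or_eq _ _ (proj1 (dfloor_spec e n))) as [H|H]; [exact H|].
      exfalso. specialize (Hfloor n).
      replace (e * 2 ^ (5 * n)) with (IZR (dfloor e n * 2 ^ Z.of_nat (4 * n))) in Hfloor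
        by (rewrite mult_IZR, IZR_pow2, H, Rmult_assoc, <- pow_add; do 2 f_equal; lia).
      rewrite INR_IZR_INZ in Hfloor. destruct Hfloor as [H1 H2].
      replace 1 with (IZR 1) in H2 by reflexivity. rewrite <- plus_IZR in H2.
      apply lt_IZR in H1, H2. lia.
Qed.

End Blocks.

Definition bin_digit (x : R) (k : nat) : nat := Z.to_nat (dfloor x (S k) mod 2).

Lemma bin_digit_le_1 x k : (bin_digit x k <= 1)%nat.
Proof. unfold bin_digit. lia. Qed.

Lemma dfloor_succ x k : dfloor x (S k) = (2 * dfloor x k + Z.of_nat (bin_digit x k))%Z.
Proof.
  unfold bin_digit. rewrite (dfloor_div_pow2 x k 1), Nat.add_1_r. simpl (2 ^ Z.of_nat 1)%Z. lia.
Qed.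

Lemma nat_of_Z_double_add z d : (d <= 1)%nat ->
  nat_of_Z (2 * z + Z.of_nat d) =
  match (nat_of_Z z mod 2)%nat with
  | 0 => 2 * nat_of_Z z + 2 * d
  | S _ => 2 * nat_of_Z z + 1 - 2 * d
  end%nat.
Proof.
  intros Hd. unfold nat_of_Z.
  destruct (Z.leb_spec 0 z).
  - replace (Z.to_nat (2 * z) mod 2)%nat with 0%nat by lia.
    rewrite (proj2 (Z.leb_le _ _)) by lia. lia.
  - replace (Z.to_nat (- 2 * z - 1) mod 2)%nat with 1%nat by lia.
    rewrite (proj2 (Z.leb_gt _ _)) by lia. lia.
Qed.

Lemma nat_of_Z_of_nat n : nat_of_Z (Z.of_nat n) = (2 * n)%nat.
Proof. unfold nat_of_Z. rewrite (proj2 (Z.leb_le _ _)) by lia. lia. Qed.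

Definition from_digits_expr (c0 : nat) :=
  Rec (Cst c0)
    (Ifz (parity (Var 1))
       (Add (double (Var 1)) (double (Fn (Var 0))))
       (Sub (Add (double (Var 1)) (Cst 1)) (double (Fn (Var 0)))))
    (Var 0).

Lemma oracle_computable_of_digits x o :
  oracle_computable (bin_digit x) o -> oracle_computable (real_oracle x) o.
Proof.
  intros Hdigits.
  apply (oracle_computable_expr o (bin_digit x) (from_digits_expr (real_oracle x 0)));
    [exact Hdigits | cbn; lia |].
  intros n. apply eval_Rec with (F := real_oracle x); [reflexivity|].
  intros m. cbn [eval_expr nth]. rewrite eval_parity, !eval_double. cbn [eval_expr nth].
  rewrite !real_oracle_dfloor, dfloor_succ, nat_of_Z_double_add by apply bin_digit_le_1.
  reflexivity.
Qed.

(** * The decomposition *)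

Section Construction.
Variables x y : R.

Definition shift : nat := Z.to_nat (- dfloor y 0).
Definition y' : R := y + IZR (Z.of_nat shift).

Lemma dfloor_y' M : dfloor y' M = (dfloor y M + Z.of_nat (shift * 2 ^ M))%Z.
Proof. unfold y'. now rewrite dfloor_add_IZR, Nat2Z.inj_mul, Nat2Z.inj_pow. Qed.

Lemma dfloor_y'_nonneg M : (0 <= dfloor y' M)%Z.
Proof.
  rewrite dfloor_y', Nat2Z.inj_mul, Nat2Z.inj_pow.
  pose proof (dfloor_div_pow2 y 0 M) as Hdiv. simpl (0 + M)%nat in Hdiv.
  assert (HM : (0 < 2 ^ Z.of_nat M)%Z) by (apply Z.pow_pos_nonneg; lia).
  pose proof (Z.mul_div_le (dfloor y M) _ HM) as Hle. rewrite <- Hdiv in Hle.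
  unfold shift. simpl (Z.of_nat 2). nia.
Qed.

(* The bits 1 0 a d, with a the k-th digit of x and d such that
   floor(2^(5k+5) y') + floor(2^(5k+5) e) is 2a modulo 4 for the real e built below. *)
Definition block (k : nat) : nat :=
  16 + 4 * bin_digit x k + (2 * bin_digit x k + 4 - Z.to_nat (dfloor y' (5 * k + 5)) mod 4) mod 4.

Lemma block_range k : (1 <= block k <= 30)%nat.
Proof. unfold block. pose proof (bin_digit_le_1 x k). lia. Qed.

Definition y'_floor_expr (M : expr) :=
  Ifz (parity (Fn M))
    (Add (half (Fn M)) (shiftl (Cst shift) M))
    (Sub (shiftl (Cst shift) M) (half (Add (Fn M) (Cst 1)))).
Definition x_digit_expr (k : expr) := parity (half (Add (Orc (Add k (Cst 1))) (Cst 1))).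
Definition block_expr (k : expr) :=
  Add (Cst 16) (Add (double (double (x_digit_expr k)))
    (mod4 (Sub (Add (double (x_digit_expr k)) (Cst 4)) (mod4 (y'_floor_expr (affine 5 5 k)))))).
Definition blocks_expr (n : expr) :=
  Rec (Cst 0) (Add (shiftl (Var 1) (Cst 5)) (block_expr (Var 0))) n.
Definition t1_oracle_expr :=
  double (shiftr (Add (y'_floor_expr (affine 5 5 (Var 0))) (blocks_expr (Add (Var 0) (Cst 1))))
            (affine 4 5 (Var 0))).
Definition t2_oracle_expr :=
  Add (double (Add (shiftr (blocks_expr (Add (Var 0) (Cst 1))) (affine 4 5 (Var 0)))
                   (shiftl (Cst shift) (Var 0))))
      (Cst 1).

Definition digit_from_t1_expr := parity (half (Orc (affine 5 4 (Var 0)))).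
Definition digit_from_t2_expr :=
  parity (half (half (Sub (half (Orc (affine 5 5 (Var 0)))) (shiftl (Cst shift) (affine 5 5 (Var 0)))))).

Section Evaluation.
Notation ev := (eval_expr (real_oracle x) (real_oracle y)).

Lemma eval_y'_floor env M : ev env (y'_floor_expr M) = Z.to_nat (dfloor y' (ev env M)).
Proof.
  unfold y'_floor_expr. cbn [eval_expr]. rewrite eval_parity, !eval_half, eval_shiftl.
  cbn [eval_expr]. set (m := ev env M). rewrite real_oracle_dfloor, dfloor_y'.
  pose proof (dfloor_y'_nonneg m) as Hnn. rewrite dfloor_y' in Hnn.
  set (Q := (shift * 2 ^ m)%nat) in *. set (z := dfloor y m) in *.
  unfold nat_of_Z. destruct (Z.leb_spec 0 z).
  - replace (Z.to_nat (2 * z) mod 2)%nat with 0%nat by lia. lia.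
  - replace (Z.to_nat (- 2 * z - 1) mod 2)%nat with 1%nat by lia. lia.
Qed.

Lemma eval_x_digit env k : ev env (x_digit_expr k) = bin_digit x (ev env k).
Proof.
  unfold x_digit_expr. rewrite eval_parity, eval_half. cbn [eval_expr].
  rewrite real_oracle_dfloor. replace (ev env k + 1)%nat with (S (ev env k)) by lia.
  unfold bin_digit, nat_of_Z. destruct (Z.leb_spec 0 (dfloor x (S (ev env k)))); lia.
Qed.

Lemma eval_block env k : ev env (block_expr k) = block (ev env k).
Proof.
  unfold block_expr. cbn [eval_expr]. rewrite !eval_double, !eval_mod4.
  cbn [eval_expr]. rewrite !eval_double, eval_mod4, eval_y'_floor, eval_affine, !eval_x_digit.
  unfold block. lia.
Qed.

Lemma eval_blocks env n : ev env (blocks_expr n) = blocks block (ev env n).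
Proof.
  apply eval_Rec with (F := blocks block); [reflexivity|]. intros m.
  cbn [eval_expr]. rewrite eval_shiftl, eval_block. cbn [eval_expr nth blocks]. lia.
Qed.

End Evaluation.

Section Summands.
Variable e : R.
Hypothesis dfloor_e_blocks : forall K, dfloor e (5 * K) = Z.of_nat (blocks block K).
Hypothesis e_nondyadic : forall n, IZR (dfloor e n) < e * 2 ^ n.

Definition t1 : R := y' + e.
Definition t2 : R := - IZR (Z.of_nat shift) - e.

Lemma t1_add_t2 : t1 + t2 = y.
Proof. unfold t1, t2, y'. ring. Qed.

Definition t1_floor_approx (K : nat) : nat := Z.to_nat (dfloor y' (5 * K)) + blocks block K.

Lemma t1_floor_approx_mod4 k : (t1_floor_approx (S k) mod 4 = 2 * bin_digit x k)%nat.
Proof.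
  unfold t1_floor_approx. replace (5 * S k)%nat with (5 * k + 5)%nat by lia.
  cbn [blocks]. unfold block. pose proof (bin_digit_le_1 x k). lia.
Qed.

Lemma dfloor_t1_bounds K :
  (Z.of_nat (t1_floor_approx K) <= dfloor t1 (5 * K) <= Z.of_nat (t1_floor_approx K) + 1)%Z.
Proof.
  unfold t1, t1_floor_approx. pose proof (dfloor_add_bounds y' e (5 * K)) as Hb.
  rewrite dfloor_e_blocks in Hb. pose proof (dfloor_y'_nonneg (5 * K)). lia.
Qed.

(* [t1_floor_approx K] is even, so a carry into bit 5K does not reach the bits above. *)
Lemma dfloor_t1 n j K : (n + j = 5 * K)%nat -> (1 <= j)%nat ->
  dfloor t1 n = (Z.of_nat (t1_floor_approx K) / 2 ^ Z.of_nat j)%Z.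
Proof.
  intros Hn Hj. rewrite (dfloor_div_pow2 t1 n j), Hn.
  destruct K as [|k]; [lia|].
  pose proof (t1_floor_approx_mod4 k). pose proof (dfloor_t1_bounds (S k)).
  replace (Z.of_nat j) with (1 + Z.of_nat (j - 1))%Z by lia.
  rewrite Z.pow_add_r, <- !Z.div_div by (try apply Z.pow_pos_nonneg; lia).
  f_equal. rewrite Z.pow_1_r. lia.
Qed.

Lemma dfloor_e n : dfloor e n = Z.of_nat (blocks block (S n) / 2 ^ (4 * n + 5)).
Proof.
  rewrite (dfloor_div_pow2 e n (4 * n + 5)).
  replace (n + (4 * n + 5))%nat with (5 * S n)%nat by lia.
  now rewrite dfloor_e_blocks, Nat2Z.inj_div, Nat2Z.inj_pow.
Qed.

Lemma real_oracle_t2 M :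
  real_oracle t2 M = (2 * (Z.to_nat (dfloor e M) + shift * 2 ^ M) + 1)%nat.
Proof.
  replace t2 with (- (e + IZR (Z.of_nat shift))) by (unfold t2; ring).
  rewrite real_oracle_dfloor, dfloor_opp, dfloor_add_IZR.
  - rewrite dfloor_e, <- Nat2Z_inj_pow2. unfold nat_of_Z.
    rewrite (proj2 (Z.leb_gt _ _)) by lia. lia.
  - rewrite dfloor_add_IZR, plus_IZR, mult_IZR, IZR_pow2. specialize (e_nondyadic M). lra.
Qed.

Lemma x_le_t1 : turing_le x t1.
Proof.
  apply oracle_computable_of_digits.
  apply (oracle_computable_expr _ _ digit_from_t1_expr _ (oracle_computable_zero _));
    [cbn; lia|]. intros k.
  unfold digit_from_t1_expr. rewrite eval_parity, eval_half. cbn [eval_expr].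
  rewrite eval_affine. cbn [eval_expr nth].
  rewrite real_oracle_dfloor, (dfloor_t1 (5 * k + 4) 1 (S k)), Z.pow_1_r by lia.
  change 2%Z with (Z.of_nat 2). rewrite <- Nat2Z.inj_div, nat_of_Z_of_nat.
  pose proof (t1_floor_approx_mod4 k). lia.
Qed.

Lemma x_le_t2 : turing_le x t2.
Proof.
  apply oracle_computable_of_digits.
  apply (oracle_computable_expr _ _ digit_from_t2_expr _ (oracle_computable_zero _));
    [cbn; lia|]. intros k.
  unfold digit_from_t2_expr. rewrite eval_parity, !eval_half. cbn [eval_expr].
  rewrite eval_half, eval_shiftl. cbn [eval_expr].
  rewrite real_oracle_t2, !eval_affine. cbn [eval_expr nth].
  replace (5 * k + 5)%nat with (5 * S k)%nat by lia.
  rewrite dfloor_e_blocks, Nat2Z.id. cbn [blocks]. unfold block.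
  pose proof (bin_digit_le_1 x k). set (Q := (shift * 2 ^ (5 * S k))%nat). lia.
Qed.

Hypothesis y_le_x : turing_le y x.

Lemma t1_le_x : turing_le t1 x.
Proof.
  apply (oracle_computable_expr _ _ t1_oracle_expr _ y_le_x); [cbn; lia|]. intros n.
  unfold t1_oracle_expr. rewrite eval_double, eval_shiftr. cbn [eval_expr].
  rewrite eval_y'_floor, eval_blocks, !eval_affine. cbn [eval_expr nth].
  rewrite real_oracle_dfloor, (dfloor_t1 n (4 * n + 5) (S n)) by lia.
  rewrite <- Nat2Z_inj_pow2, <- Nat2Z.inj_div, nat_of_Z_of_nat. unfold t1_floor_approx.
  replace (5 * S n)%nat with (5 * n + 5)%nat by lia. rewrite Nat.add_1_r. lia.
Qed.

Lemma t2_le_x : turing_le t2 x.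
Proof.
  apply (oracle_computable_expr _ _ t2_oracle_expr _ y_le_x); [cbn; lia|]. intros n.
  unfold t2_oracle_expr. cbn [eval_expr]. rewrite eval_double. cbn [eval_expr].
  rewrite eval_shiftr, eval_shiftl, eval_blocks, eval_affine. cbn [eval_expr nth].
  rewrite real_oracle_t2, dfloor_e, Nat2Z.id.
  replace (n + 1)%nat with (S n) by lia. lia.
Qed.

End Summands.
End Construction.

Theorem mainTheorem3 (x y : R) :
  turing_le y x ->
  exists l : list R, y = sum_list l /\ Forall (fun z => turing_equiv z x) l.
Proof.
  intros y_le_x.
  destruct (exists_real_with_blocks (block x y) (block_range x y)) as [e [He_blocks He_nondyadic]].
  exists [t1 y e; t2 y e]. split.
  - simpl. now rewrite Rplus_0_r, t1_add_t2.
  - repeat constructor.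
    + now apply t1_le_x.
    + now apply x_le_t1.
    + now apply t2_le_x.
    + now apply x_le_t2.
Qed.
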